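(* Let $j\in\mathbb Z$, and let $\lambda,\mu$ be partitions such that $\lambda$ has an addable node $\mathfrak l$ in column $j$ and $\mu$ has an addable node in column $j$; set $\lambda^+=\lambda\cup\{\mathfrak l\}$. Then $\mathrm e_{\lambda^+\mu}=\mathrm e_{\lambda\mu}$.
   Context: Partitions are identified with Young diagrams $\{(a,b)\in\mathbb N^2:b\le\lambda_a\}$; nodes are elements of $\mathbb N^2$; $(a,b)$ has height $a+b$ and lies in column $b-a$ (smaller column = further left). An addable node of $\lambda$ is a node not in $\lambda$ whose addition gives a partition. $\mathtt{NE}(\mathfrak n)=\mathfrak n+(0,1)$, $\mathtt{SW}(\mathfrak n)=\mathfrak n-(0,1)$, $\mathtt{SE}(\mathfrak n)=\mathfrak n-(1,0)$. A tile is a finite nonempty set of nodes orderable $\mathfrak n_1,\dots,\mathfrak n_r$ with $\mathfrak n_{i+1}\in\{\mathtt{NE}(\mathfrak n_i),\mathtt{SE}(\mathfrak n_i)\}$; start = leftmost node, end = rightmost node; Dyck tile if start and end both attain the maximal height of its nodes. A Dyck tiling of $\lambda\setminus\mu$ is a partition of it into Dyck tiles. It is cover-expansive if whenever $\mathfrak a,\mathtt{SE}(\mathfrak a)\in\lambda\setminus\mu$, the tile of $\mathtt{SE}(\mathfrak a)$ starts weakly left of the start of the tile of $\mathfrak a$, and whenever $\mathfrak a,\mathtt{SW}(\mathfrak a)\in\lambda\setminus\mu$, the tile of $\mathtt{SW}(\mathfrak a)$ ends weakly right of the end of the tile of $\mathfrak a$. $\mathrm e_{\lambda\mu}$ is the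 number of cover-expansive Dyck tilings of $\lambda\setminus\mu$ if $\lambda\supseteq\mu$, and $0$ otherwise. *)

From mathcomp Require Import all_boot all_order all_algebra.
Set Implicit Arguments. Unset Strict Implicit. Unset Printing Implicit Defensive.
Import Order.TTheory GRing.Theory Num.Theory.

(* Nodes are elements of N^2 with N = {1,2,...}; represented as nat*nat,
   only pairs with both coordinates >= 1 ever occur in a diagram. *)
Definition node := (nat * nat)%type.
Definition height (n : node) : nat := n.1 + n.2.
Definition column (n : node) : int := (n.2%:Z - n.1%:Z)%R.
Definition NE (n : node) : node := (n.1, n.2.+1).
Definition NW (n : node) : node := (n.1.+1, n.2).

Definition is_partition (l : seq nat) : bool :=
  sorted geq l && all (fun x => 0 < x) l.
Definition in_diagram (l : seq nat) (n : node) : bool :=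
  [&& 0 < n.1, 0 < n.2 & n.2 <= nth 0 l n.1.-1].

Definition addable (l : seq nat) (n : node) : Prop :=
  ~~ in_diagram l n /\
  exists l', is_partition l' /\
             forall m, in_diagram l' m = in_diagram l m || (m == n).

Definition diag_nodes (l : seq nat) : seq node :=
  [seq (a, b) | a <- iota 1 (size l), b <- iota 1 (nth 0 l a.-1)].
Definition contains (lam mu : seq nat) : bool :=
  all (in_diagram lam) (diag_nodes mu).
Definition skew_nodes (lam mu : seq nat) : seq node :=
  [seq n <- diag_nodes lam | ~~ in_diagram mu n].

Section Tilings.
Variables lam mu : seq nat.
Notation N := (seq_sub (skew_nodes lam mu)).

Definition stepN (x y : N) : bool :=
  (val y == NE (val x)) || (NW (val y) == val x).

Definition is_tile (T : {set N}) : bool :=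
  (T != set0) &&
  [exists s : #|T|.-tuple N, (T == [set x in s]) && sorted stepN s].

Definition starts_at (T : {set N}) (x : N) : bool :=
  (x \in T) && [forall y in T, (column (val x) <= column (val y))%R].
Definition ends_at (T : {set N}) (x : N) : bool :=
  (x \in T) && [forall y in T, (column (val y) <= column (val x))%R].

Definition is_dyck_tile (T : {set N}) : bool :=
  is_tile T &&
  [exists x, exists y,
     [&& starts_at T x, ends_at T y &
         [forall z in T, (height (val z) <= height (val x))
                         && (height (val z) <= height (val y))]]].

Definition is_dyck_tiling (P : {set {set N}}) : bool :=
  partition P [set: N] && [forall T in P, is_dyck_tile T].

Definition cover_expansive (P : {set {set N}}) : bool :=
  [forall x, forall y, forall Tx in P, forall Ty in P,
     ((x \in Tx) && (y \in Ty)) ==>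
     (* y = SE(x): tile of y starts weakly left of start of tile of x *)
     (((NW (val y) == val x) ==>
        [forall sx, forall sy, (starts_at Tx sx && starts_at Ty sy) ==>
            (column (val sy) <= column (val sx))%R]) &&
     (* y = SW(x): tile of y ends weakly right of end of tile of x *)
      ((NE (val y) == val x) ==>
        [forall ex, forall ey, (ends_at Tx ex && ends_at Ty ey) ==>
            (column (val ex) <= column (val ey))%R]))].

End Tilings.

Definition e_coef (lam mu : seq nat) : nat :=
  if contains lam mu then
    #|[set P : {set {set seq_sub (skew_nodes lam mu)}} |
        is_dyck_tiling P && cover_expansive P]|
  else 0.

From mathcomp Require Import all_boot all_order all_algebra zify.
Import Order.TTheory GRing.Theory Num.Theory.
Set Implicit Arguments. Unset Strict Implicit. Unset Printing Implicit Defensive.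

(* Let m be the addable node of mu in the column of l. When mu is contained in lambda, l lies
   on the diagonal above m, l = m + (d, d). In a cover-expansive Dyck tiling of lambda \ mu or of
   lambda^+ \ mu, induction up this diagonal shows that the tile of each m + (i, i), i < d, also
   contains its NW and NE neighbours: cover-expansiveness forces that tile to reach further left
   and further right, while its SW and SE neighbours are excluded because they already belong to a
   different tile meeting the same column. Consequently l is a tile by itself in lambda^+ \ mu,
   and adjoining the tile {l} is a bijection between the cover-expansive Dyck tilings of
   lambda \ mu and of lambda^+ \ mu: the only new cover-expansiveness constraints involve SW l and
   SE l, whose tile reaches the column of l. If mu is not contained in lambda, it is not contained
   in lambda^+ either, since l in mu would force NE l into mu. *)

(* On nodes with positive coordinates these invert [NE] and [NW]; elsewhere [.-1] truncates. *)
Definition SW (n : node) : node := (n.1, n.2.-1).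
Definition SE (n : node) : node := (n.1.-1, n.2).
Definition up_diag (n : node) (i : nat) : node := (n.1 + i, n.2 + i).

Lemma column_NE n : column (NE n) = (column n + 1)%R.
Proof. by case: n => a b; rewrite /column /=; lia. Qed.

Lemma column_NW n : column (NW n) = (column n - 1)%R.
Proof. by case: n => a b; rewrite /column /=; lia. Qed.

Lemma column_up_diag n i : column (up_diag n i) = column n.
Proof. by case: n => a b; rewrite /column /=; lia. Qed.

Lemma up_diag0 n : up_diag n 0 = n.
Proof. by case: n => a b; rewrite /up_diag /= !addn0. Qed.

Lemma NE_neq n : NE n != n.
Proof. by apply/eqP=> /(congr1 snd) /=; lia. Qed.

Lemma NW_neq n : NW n != n.
Proof. by apply/eqP=> /(congr1 fst) /=; lia. Qed.

Lemma SW_NE n : SW (NE n) = n.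
Proof. by case: n. Qed.

Lemma SE_NW n : SE (NW n) = n.
Proof. by case: n. Qed.

Lemma SW_up_diagS n i : SW (up_diag n i.+1) = NW (up_diag n i).
Proof. by rewrite /SW /NW /= !addnS. Qed.

Lemma SE_up_diagS n i : SE (up_diag n i.+1) = NE (up_diag n i).
Proof. by rewrite /SE /NE /= !addnS. Qed.

Lemma up_diag_inj n : injective (up_diag n).
Proof. by move=> i i' [] /addnI. Qed.

Section TileGeometry.
Variables L M : seq nat.
Notation N := (seq_sub (skew_nodes L M)).
Notation stepN := (@stepN L M).
Implicit Types (x y : N) (T : {set N}).

Lemma stepN_column x y : stepN x y -> column (val y) = (column (val x) + 1)%R.
Proof. by case/orP=> /eqP Exy; rewrite ?Exy ?column_NE // -Exy column_NW; lia. Qed.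

Lemma sorted_stepN_column (s : seq N) x0 i : sorted stepN s -> i < size s ->
  column (val (nth x0 s i)) = (column (val (nth x0 s 0)) + i%:Z)%R.
Proof.
move=> /(sortedP x0) step; elim: i => [|i IHi] lt_i_s; first by rewrite addr0.
rewrite (stepN_column (step i lt_i_s)) IHi; last exact: ltnW.
by rewrite -addn1 PoszD addrA.
Qed.

Lemma sorted_stepN_column_index (s : seq N) x y : sorted stepN s ->
  x \in s -> y \in s ->
  (column (val y) - column (val x))%R = ((index y s)%:Z - (index x s)%:Z)%R.
Proof.
move=> srt xs ys; rewrite -{1}(nth_index x xs) -{1}(nth_index x ys).
rewrite (sorted_stepN_column x (i := index x s) srt) ?index_mem //.
rewrite (sorted_stepN_column x (i := index y s) srt) ?index_mem //.
by rewrite opprD addrACA subrr add0r.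
Qed.

Lemma is_tileP T : is_tile T <->
  T != set0 /\ exists s : seq N, [/\ size s = #|T|, T = [set x in s] & sorted stepN s].
Proof.
split=> [/andP[T0 /existsP[s /andP[/eqP defT srt]]] | [T0 [s [size_s defT srt]]]].
  by split=> //; exists s; rewrite size_tuple.
apply/andP; split=> //; apply/existsP; exists (Tuple (introT eqP size_s)).
by rewrite /= -defT eqxx.
Qed.

Lemma tile_column_inj T x y : is_tile T -> x \in T -> y \in T ->
  column (val x) = column (val y) -> x = y.
Proof.
case/is_tileP=> _ [s [_ -> srt]]; rewrite !inE => xs ys Exy.
have := sorted_stepN_column_index srt xs ys; rewrite Exy subrr => /eqP.
rewrite eq_sym subr_eq0 => /eqP [] /(congr1 (nth x s)).
by rewrite !nth_index.
Qed.

Lemma tile_stepN_to T x y : is_tile T -> x \in T -> y \in T ->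
  (column (val y) < column (val x))%R -> exists2 w, w \in T & stepN w x.
Proof.
case/is_tileP=> _ [s [_ -> srt]]; rewrite !inE => xs ys.
rewrite -subr_gt0 (sorted_stepN_column_index srt ys xs).
case ix: (index x s) => [|i] //; first by rewrite subr_gt0 ltNge lez_nat leq0n.
move=> _; have lt_i_s : i.+1 < size s by rewrite -ix index_mem.
exists (nth x s i); first by rewrite inE mem_nth // ltnW.
by have := (sortedP x srt) i lt_i_s; rewrite -ix nth_index.
Qed.

Lemma tile_stepN_from T x y : is_tile T -> x \in T -> y \in T ->
  (column (val x) < column (val y))%R -> exists2 w, w \in T & stepN x w.
Proof.
case/is_tileP=> _ [s [_ -> srt]]; rewrite !inE => xs ys.
rewrite -subr_gt0 (sorted_stepN_column_index srt xs ys) subr_gt0 ltz_nat => lt_xy.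
have lt_x_s : (index x s).+1 < size s by apply: leq_ltn_trans lt_xy _; rewrite index_mem.
exists (nth x s (index x s).+1); first by rewrite inE mem_nth.
by have := (sortedP x srt) _ lt_x_s; rewrite nth_index.
Qed.

Lemma starts_at_le T s x : starts_at T s -> x \in T ->
  (column (val s) <= column (val x))%R.
Proof. by case/andP=> _ /forall_inP; apply. Qed.

Lemma ends_at_ge T e x : ends_at T e -> x \in T ->
  (column (val x) <= column (val e))%R.
Proof. by case/andP=> _ /forall_inP; apply. Qed.

Lemma starts_at_exists T : T != set0 -> exists s, starts_at T s.
Proof.
case/set0Pn=> x0 x0T; have [s sT min_s] := arg_minP (fun x => column (val x)) x0T.
by exists s; apply/andP; split=> //; apply/forall_inP.
Qed.

Lemma ends_at_exists T : T != set0 -> exists e, ends_at T e.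
Proof.
case/set0Pn=> x0 x0T; have [e eT max_e] := arg_maxP (fun x => column (val x)) x0T.
by exists e; apply/andP; split=> //; apply/forall_inP.
Qed.

Lemma dyck_tile1 x : is_dyck_tile [set x].
Proof.
have x_start : starts_at [set x] x.
  by rewrite /starts_at set11; apply/forall_inP => y /set1P ->.
have x_end : ends_at [set x] x.
  by rewrite /ends_at set11; apply/forall_inP => y /set1P ->.
apply/andP; split.
  apply/is_tileP; split; first by apply/set0Pn; exists x; rewrite set11.
  by exists [:: x]; split; rewrite ?cards1 //; apply/setP => y; rewrite !inE.
apply/existsP; exists x; apply/existsP; exists x; rewrite x_start x_end.
by apply/forall_inP => y /set1P ->; rewrite leqnn.
Qed.

End TileGeometry.

Section CoverExpansive.
Variables L M : seq nat.
Notation N := (seq_sub (skew_nodes L M)).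
Implicit Types (x y w : N) (P : {set {set N}}).

Definition expansive_SE P : Prop :=
  forall x y sx sy (Tx Ty : {set N}), Tx \in P -> Ty \in P -> x \in Tx -> y \in Ty ->
    NW (val y) = val x -> starts_at Tx sx -> starts_at Ty sy ->
    (column (val sy) <= column (val sx))%R.

Definition expansive_SW P : Prop :=
  forall x y ex ey (Tx Ty : {set N}), Tx \in P -> Ty \in P -> x \in Tx -> y \in Ty ->
    NE (val y) = val x -> ends_at Tx ex -> ends_at Ty ey ->
    (column (val ex) <= column (val ey))%R.

Lemma cover_expansiveP P : cover_expansive P <-> expansive_SE P /\ expansive_SW P.
Proof.
split=> [CE | [CE_SE CE_SW]].
  split=> x y s1 s2 Tx Ty TxP TyP xTx yTy /eqP Exy s1T s2T;
  move/forallP: CE => /(_ x)/forallP/(_ y)/forall_inP/(_ Tx TxP)/forall_inP/(_ Ty TyP);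
  rewrite xTx yTy Exy /= => /andP[H1 H2];
  [move: H1 | move: H2] => /forallP/(_ s1)/forallP/(_ s2); rewrite s1T s2T; exact.
apply/forallP=> x; apply/forallP=> y; apply/forall_inP=> Tx TxP.
apply/forall_inP=> Ty TyP; apply/implyP=> /andP[xTx yTy].
apply/andP; split; apply/implyP=> /eqP Exy; apply/forallP=> s1; apply/forallP=> s2;
  apply/implyP=> /andP[s1T s2T].
  exact: CE_SE TxP TyP xTx yTy Exy s1T s2T.
exact: CE_SW TxP TyP xTx yTy Exy s1T s2T.
Qed.

Variable P : {set {set N}}.
Hypotheses (P_tiling : is_dyck_tiling P) (P_expansive : cover_expansive P).

Let P_partition : partition P [set: N]. Proof. by case/andP: P_tiling. Qed.
Let P_trivIset : trivIset P. Proof. by case/and3P: P_partition. Qed.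

Let P_cover x : x \in cover P.
Proof. by case/and3P: P_partition => /eqP -> _ _; rewrite inE. Qed.

Let P_SE : expansive_SE P. Proof. by case/cover_expansiveP: P_expansive. Qed.
Let P_SW : expansive_SW P. Proof. by case/cover_expansiveP: P_expansive. Qed.

Lemma pblock_tiling x : pblock P x \in P.
Proof. exact/pblock_mem/P_cover. Qed.

Lemma mem_pblock_self x : x \in pblock P x.
Proof. by rewrite mem_pblock P_cover. Qed.

Lemma pblock_neq0 x : pblock P x != set0.
Proof. by apply/set0Pn; exists x; apply: mem_pblock_self. Qed.

Lemma pblock_tile x : is_tile (pblock P x).
Proof. by case/andP: P_tiling => _ /forall_inP/(_ _ (pblock_tiling x))/andP[]. Qed.

Lemma pblock_eq T x : T \in P -> x \in T -> pblock P x = T.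
Proof. exact: def_pblock. Qed.

Lemma mem_pblock_sym x y : (x \in pblock P y) = (y \in pblock P x).
Proof. by rewrite -!eq_pblock ?P_cover // eq_sym. Qed.

Lemma pblock_column_inj x y : y \in pblock P x -> column (val x) = column (val y) -> x = y.
Proof. exact/tile_column_inj/mem_pblock_self/pblock_tile. Qed.

Lemma pblock_column_disjoint x y w : column (val x) = column (val y) -> x != y ->
  w \in pblock P x -> w \notin pblock P y.
Proof.
move=> Exy /eqP neq_xy wx; apply/negP=> wy; apply/neq_xy/pblock_column_inj => //.
by rewrite -(same_pblock P_trivIset wx) (same_pblock P_trivIset wy) mem_pblock_self.
Qed.

(* Cover-expansiveness makes the tile of [n] reach left of [n], so it contains
   a predecessor of [n]; when [SW n] is excluded this can only be [NW n]. *)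
Lemma NW_in_pblock n a : val a = NW (val n) ->
  (forall w, val w = SW (val n) -> w \notin pblock P n) -> a \in pblock P n.
Proof.
move=> Ea SW_out.
have [[sa sa_start] [sn sn_start]] :=
  (starts_at_exists (pblock_neq0 a), starts_at_exists (pblock_neq0 n)).
have le_sn_sa := P_SE (pblock_tiling a) (pblock_tiling n)
  (mem_pblock_self a) (mem_pblock_self n) (esym Ea) sa_start sn_start.
have le_sa_a := starts_at_le sa_start (mem_pblock_self a).
have sn_n : sn \in pblock P n by case/andP: sn_start.
have [|w wn /orP[/eqP Ew | /eqP Ew]] :=
  tile_stepN_to (pblock_tile n) (mem_pblock_self n) sn_n.
- rewrite (le_lt_trans le_sn_sa) // (le_lt_trans le_sa_a) // Ea column_NW.
  by rewrite ltrBlDr ltrDl.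
- by have := SW_out w; rewrite Ew SW_NE wn => /(_ erefl).
- by have -> : a = w by apply: val_inj; rewrite Ea Ew.
Qed.

Lemma NE_in_pblock n b : val b = NE (val n) ->
  (forall w, val w = SE (val n) -> w \notin pblock P n) -> b \in pblock P n.
Proof.
move=> Eb SE_out.
have [[eb eb_end] [en en_end]] :=
  (ends_at_exists (pblock_neq0 b), ends_at_exists (pblock_neq0 n)).
have le_eb_en := P_SW (pblock_tiling b) (pblock_tiling n)
  (mem_pblock_self b) (mem_pblock_self n) (esym Eb) eb_end en_end.
have le_b_eb := ends_at_ge eb_end (mem_pblock_self b).
have en_n : en \in pblock P n by case/andP: en_end.
have [|w wn /orP[/eqP Ew | /eqP Ew]] :=
  tile_stepN_from (pblock_tile n) (mem_pblock_self n) en_n.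
- rewrite (lt_le_trans _ le_eb_en) // (lt_le_trans _ le_b_eb) // Eb column_NE.
  by rewrite ltrDl.
- by have -> : b = w by apply: val_inj; rewrite Eb Ew.
- by have := SE_out w; rewrite -Ew SE_NW wn => /(_ erefl).
Qed.

(* Induction up the diagonal: [SW] and [SE] of [up_diag m i.+1] are [NW] and [NE] of
   [up_diag m i], hence lie in the tile of [up_diag m i], which meets the same column. *)
Section Diagonal.
Variables (m : node) (k : nat).
Hypotheses (diag_skew : forall i, i < k -> [/\ up_diag m i \in skew_nodes L M,
    NW (up_diag m i) \in skew_nodes L M & NE (up_diag m i) \in skew_nodes L M])
  (SW_out : SW m \notin skew_nodes L M) (SE_out : SE m \notin skew_nodes L M).

Lemma up_neighbours_in_pblock i n a b : i < k -> val n = up_diag m i ->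
  val a = NW (val n) -> val b = NE (val n) -> a \in pblock P n /\ b \in pblock P n.
Proof.
elim: i n a b => [|i IHi] n a b lt_ik En Ea Eb.
  rewrite up_diag0 in En.
  split; [apply: NW_in_pblock | apply: NE_in_pblock] => // w Ew.
    by move: (valP w); rewrite Ew En (negbTE SW_out).
  by move: (valP w); rewrite Ew En (negbTE SE_out).
have [n'_skew a'_skew b'_skew] := diag_skew (ltnW lt_ik).
have [a'n' b'n'] := IHi (SeqSub n'_skew) (SeqSub a'_skew) (SeqSub b'_skew)
  (ltnW lt_ik) erefl erefl erefl.
have col_n' : column (val (SeqSub n'_skew)) = column (val n).
  by rewrite En !column_up_diag.
have n'_neq : SeqSub n'_skew != n.
  by apply/eqP=> /(congr1 val); rewrite En => /up_diag_inj /n_Sn.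
split; [apply: NW_in_pblock | apply: NE_in_pblock] => // w Ew.
  have -> : w = SeqSub a'_skew by apply: val_inj; rewrite Ew En SW_up_diagS.
  exact: pblock_column_disjoint col_n' n'_neq a'n'.
have -> : w = SeqSub b'_skew by apply: val_inj; rewrite Ew En SE_up_diagS.
exact: pblock_column_disjoint col_n' n'_neq b'n'.
Qed.

Lemma pblock_below_diag y : val y = SW (up_diag m k) \/ val y = SE (up_diag m k) ->
  0 < k /\ exists2 z, z \in pblock P y & val z = up_diag m k.-1.
Proof.
case Ek: k => [|i] Ey.
  move: (valP y); rewrite up_diag0 in Ey.
  by case: Ey => ->; rewrite ?(negbTE SW_out) ?(negbTE SE_out).
have lt_ik : i < k by rewrite Ek.
have [n_skew a_skew b_skew] := diag_skew lt_ik.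
have [an bn] := up_neighbours_in_pblock (n := SeqSub n_skew) (a := SeqSub a_skew)
  (b := SeqSub b_skew) lt_ik erefl erefl erefl.
split=> //; exists (SeqSub n_skew) => //.
case: Ey => Ey; [have -> : y = SeqSub a_skew | have -> : y = SeqSub b_skew];
  rewrite ?(same_pblock P_trivIset an) ?(same_pblock P_trivIset bn) ?mem_pblock_self //;
  by apply: val_inj; rewrite Ey ?SW_up_diagS ?SE_up_diagS.
Qed.
End Diagonal.
End CoverExpansive.

Lemma column_eqE (x y : node) : column x = column y -> x.2 + y.1 = y.2 + x.1.
Proof. by case: x => a b; case: y => c d; rewrite /column /=; lia. Qed.

Lemma mem_diag_nodes L n : (n \in diag_nodes L) = in_diagram L n.
Proof.
case: n => a b; rewrite /in_diagram /=.
apply/allpairsPdep/idP => [[a' [b' [+ + [-> ->]]]] | /and3P[a_gt0 b_gt0 le_b]].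
  by rewrite !mem_iota /= => /andP[-> _] /andP[-> /=]; rewrite add1n ltnS.
have le_a : a <= size L.
  by apply: contraLR le_b; rewrite -!ltnNge => lt_La; rewrite nth_default //; lia.
by exists a, b; rewrite !mem_iota; split => //; lia.
Qed.

Lemma mem_skew_nodes L M n :
  (n \in skew_nodes L M) = in_diagram L n && ~~ in_diagram M n.
Proof. by rewrite mem_filter mem_diag_nodes andbC. Qed.

Lemma containsP L M :
  reflect (forall n, in_diagram M n -> in_diagram L n) (contains L M).
Proof.
apply: (iffP allP) => sub_ML n; first by rewrite -mem_diag_nodes => /sub_ML.
by rewrite mem_diag_nodes => /sub_ML.
Qed.

Lemma in_diagram_le L (x y : node) : is_partition L -> in_diagram L x ->
  0 < y.1 <= x.1 -> 0 < y.2 <= x.2 -> in_diagram L y.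
Proof.
case/andP=> srt _; case: x => a b; case: y => c d /=.
rewrite /in_diagram /= => /and3P[a_gt0 b_gt0 le_b] le_c le_d.
apply/and3P; split; try lia.
have lt_a : a.-1 < size L.
  by case: (ltnP a.-1 (size L)) le_b => // ?; rewrite nth_default //; lia.
have ge_trans : transitive geq by move=> u v w /= ? ?; apply: leq_trans; eassumption.
have : nth 0 L a.-1 <= nth 0 L c.-1.
  by apply: (sorted_leq_nth ge_trans (fun x => leqnn x) 0 srt); rewrite ?inE; lia.
lia.
Qed.

Lemma addable_pos L n : addable L n -> 0 < n.1 /\ 0 < n.2.
Proof. by case=> _ [L' [_ /(_ n)]]; rewrite eqxx orbT => /and3P[]. Qed.

Lemma addable_lt_in L n y : addable L n -> 0 < y.1 <= n.1 -> 0 < y.2 <= n.2 ->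
  y != n -> in_diagram L y.
Proof.
case=> _ [L' [L'_part L'E]] le_y1 le_y2 neq_yn.
have := @in_diagram_le L' n y L'_part; rewrite L'E eqxx orbT => /(_ isT le_y1 le_y2).
by rewrite L'E (negbTE neq_yn) orbF.
Qed.

Lemma addable_ge_notin L n y : is_partition L -> addable L n ->
  n.1 <= y.1 -> n.2 <= y.2 -> ~~ in_diagram L y.
Proof.
move=> L_part n_add le1 le2; have [n1_gt0 n2_gt0] := addable_pos n_add.
by apply: contra n_add.1 => /in_diagram_le; apply=> //; lia.
Qed.

Lemma addable_NE_notin L n : is_partition L -> addable L n -> ~~ in_diagram L (NE n).
Proof. by move=> L_part /addable_ge_notin; apply=> //=. Qed.

Lemma addable_NW_notin L n : is_partition L -> addable L n -> ~~ in_diagram L (NW n).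
Proof. by move=> L_part /addable_ge_notin; apply=> //=. Qed.

Lemma addable_SW_notin_skew L M n : addable M n -> SW n \notin skew_nodes L M.
Proof.
move=> n_add; have [n1_gt0 n2_gt0] := addable_pos n_add.
rewrite mem_skew_nodes negb_and negbK /SW; case: (ltnP 1 n.2) => [lt1n2 | le_n2].
  rewrite (addable_lt_in n_add) ?orbT //=; try lia.
  by apply/eqP=> /(congr1 snd) /=; lia.
by rewrite /in_diagram /=; apply/orP; left; lia.
Qed.

Lemma addable_SE_notin_skew L M n : addable M n -> SE n \notin skew_nodes L M.
Proof.
move=> n_add; have [n1_gt0 n2_gt0] := addable_pos n_add.
rewrite mem_skew_nodes negb_and negbK /SE; case: (ltnP 1 n.1) => [lt1n1 | le_n1].
  rewrite (addable_lt_in n_add) ?orbT //=; try lia.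
  by apply/eqP=> /(congr1 fst) /=; lia.
by rewrite /in_diagram /=; apply/orP; left; lia.
Qed.

Section SkewEmbedding.
Variables L L' M : seq nat.
Hypothesis skew_sub : {subset skew_nodes L M <= skew_nodes L' M}.
Notation N := (seq_sub (skew_nodes L M)).
Notation N' := (seq_sub (skew_nodes L' M)).
Implicit Types (x : N) (T : {set N}).

Definition skew_emb x : N' := SeqSub (skew_sub (ssvalP x)).

Lemma skew_emb_inj : injective skew_emb.
Proof. by move=> x y /(congr1 val) /= /val_inj. Qed.

Lemma is_tile_emb T : is_tile (skew_emb @: T) = is_tile T.
Proof.
have imset0P : (skew_emb @: T == set0) = (T == set0) by rewrite imset_eq0.
have sorted_emb s : sorted (@stepN L' M) (map skew_emb s) = sorted (@stepN L M) s.
  exact: sorted_map.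
apply/idP/idP=> /is_tileP[T0 [s [size_s defT srt]]];
  apply/is_tileP; rewrite ?imset0P in T0 *; split=> //.
  have [s0 defs] : exists s0, map skew_emb s0 = s.
    have : {subset s <= skew_emb @: T} by move=> y ys; rewrite defT inE.
    elim: s {size_s defT srt} => [|y s IHs] sub_s; first by exists [::].
    have /imsetP[x _ ->] := sub_s y (mem_head y s).
    have [|s0 <-] := IHs; first by move=> z zs; apply: sub_s; rewrite inE zs orbT.
    by exists (x :: s0).
  exists s0; rewrite -sorted_emb defs; split=> //.
    by rewrite -(card_imset _ skew_emb_inj) -size_s -defs size_map.
  apply/setP=> x; rewrite inE -(mem_imset _ _ skew_emb_inj) defT inE -defs.
  by rewrite (mem_map skew_emb_inj).
exists (map skew_emb s); rewrite sorted_emb size_map size_s (card_imset _ skew_emb_inj).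
split=> //; apply/setP=> y; rewrite defT inE.
by apply/imsetP/mapP => -[x xs ->]; exists x; rewrite ?inE in xs *.
Qed.

Lemma starts_at_emb T x : starts_at (skew_emb @: T) (skew_emb x) = starts_at T x.
Proof.
rewrite /starts_at (mem_imset _ _ skew_emb_inj); congr andb.
apply/forall_inP/forall_inP => [le_x y yT | le_x _ /imsetP[y yT ->]]; last exact: le_x.
exact: le_x (imset_f _ yT).
Qed.

Lemma ends_at_emb T x : ends_at (skew_emb @: T) (skew_emb x) = ends_at T x.
Proof.
rewrite /ends_at (mem_imset _ _ skew_emb_inj); congr andb.
apply/forall_inP/forall_inP => [le_x y yT | le_x _ /imsetP[y yT ->]]; last exact: le_x.
exact: le_x (imset_f _ yT).
Qed.

Lemma starts_at_emb_inv T s : starts_at (skew_emb @: T) s ->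
  exists2 s0, s = skew_emb s0 & starts_at T s0.
Proof.
move=> s_start; case/andP: (s_start) => /imsetP[s0 _ Es] _.
by exists s0; rewrite // -starts_at_emb -Es.
Qed.

Lemma ends_at_emb_inv T e : ends_at (skew_emb @: T) e ->
  exists2 e0, e = skew_emb e0 & ends_at T e0.
Proof.
move=> e_end; case/andP: (e_end) => /imsetP[e0 _ Ee] _.
by exists e0; rewrite // -ends_at_emb -Ee.
Qed.

Lemma is_dyck_tile_emb T : is_dyck_tile (skew_emb @: T) = is_dyck_tile T.
Proof.
rewrite /is_dyck_tile is_tile_emb; congr andb.
apply/existsP/existsP => -[s /existsP[e /and3P[s_start e_end top]]].
  have [s0 Es s0_start] := starts_at_emb_inv s_start.
  have [e0 Ee e0_end] := ends_at_emb_inv e_end; subst s e.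
  exists s0; apply/existsP; exists e0; rewrite s0_start e0_end.
  by apply/forall_inP=> z zT; move/forall_inP: top => /(_ (skew_emb z) (imset_f _ zT)).
exists (skew_emb s); apply/existsP; exists (skew_emb e).
rewrite starts_at_emb ends_at_emb s_start e_end.
by apply/forall_inP=> _ /imsetP[z zT ->]; move/forall_inP: top; apply.
Qed.
End SkewEmbedding.

Lemma contains_add_node lam mu lamp l m :
  is_partition lam -> is_partition mu -> addable lam l ->
  (forall n, in_diagram lamp n = in_diagram lam n || (n == l)) ->
  addable mu m -> column m = column l -> contains lamp mu = contains lam mu.
Proof.
move=> lam_part mu_part l_add lampE m_add /column_eqE col_ml.
apply/containsP/containsP=> sub_mu n n_mu; last by rewrite lampE sub_mu.
have := sub_mu n n_mu; rewrite lampE => /orP[// | /eqP En]; subst n.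
have [[l1_gt0 l2_gt0] [m1_gt0 m2_gt0]] := (addable_pos l_add, addable_pos m_add).
case: (leqP m.1 l.1) => [le_ml | lt_lm].
  by move: n_mu; rewrite (negbTE (addable_ge_notin mu_part m_add le_ml _)) //; lia.
have NE_mu : in_diagram mu (NE l).
  apply: (addable_lt_in m_add); rewrite /NE /=; try lia.
  by apply/eqP=> /(congr1 fst) /=; lia.
have := sub_mu _ NE_mu; rewrite lampE (negbTE (addable_NE_notin lam_part l_add)).
by rewrite (negbTE (NE_neq l)).
Qed.

Section AddNode.
Variables (lam mu lamp : seq nat) (l m : node).
Hypotheses (lam_part : is_partition lam) (mu_part : is_partition mu)
  (l_addable : addable lam l)
  (lampE : forall n, in_diagram lamp n = in_diagram lam n || (n == l))
  (m_addable : addable mu m) (col_ml : column m = column l)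
  (mu_sub : forall n, in_diagram mu n -> in_diagram lam n).

Let d := l.1 - m.1.

Lemma l_up_diag : l = up_diag m d.
Proof.
have [[l1_gt0 l2_gt0] [m1_gt0 m2_gt0]] := (addable_pos l_addable, addable_pos m_addable).
have le_ml : m.1 <= l.1.
  rewrite leqNgt; apply: contra l_addable.1 => lt_lm.
  apply/mu_sub/(addable_lt_in m_addable); try by move: (column_eqE col_ml); lia.
  by apply: contraTneq lt_lm => ->; rewrite ltnn.
by move: (column_eqE col_ml); rewrite /d /up_diag; case: (l) le_ml => a b /= *; congr pair; lia.
Qed.

Lemma diag_skew_lam i : i < d -> [/\ up_diag m i \in skew_nodes lam mu,
  NW (up_diag m i) \in skew_nodes lam mu & NE (up_diag m i) \in skew_nodes lam mu].
Proof.
have [[l1_gt0 l2_gt0] [m1_gt0 m2_gt0]] := (addable_pos l_addable, addable_pos m_addable).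
have [l1E l2E] : l.1 = m.1 + d /\ l.2 = m.2 + d by rewrite {1 2}l_up_diag.
have skew y : m.1 <= y.1 <= l.1 -> m.2 <= y.2 <= l.2 -> y.1 + y.2 < l.1 + l.2 ->
    y \in skew_nodes lam mu.
  move=> /andP[le1 ge1] /andP[le2 ge2] lt_h.
  rewrite mem_skew_nodes (addable_ge_notin mu_part m_addable) // andbT.
  rewrite (addable_lt_in l_addable) //; try lia.
  by apply/eqP=> Ey; rewrite Ey in lt_h; lia.
by move=> lt_id; split; apply: skew; rewrite /=; lia.
Qed.

Lemma skew_lamp y : (y \in skew_nodes lamp mu) = (y \in skew_nodes lam mu) || (y == l).
Proof.
rewrite !mem_skew_nodes lampE; case: eqP => [->|_]; last by rewrite !orbF.
by rewrite (negbTE l_addable.1) orbT /= (contra (@mu_sub l) l_addable.1).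
Qed.

Lemma diag_skew_lamp i : i < d -> [/\ up_diag m i \in skew_nodes lamp mu,
  NW (up_diag m i) \in skew_nodes lamp mu & NE (up_diag m i) \in skew_nodes lamp mu].
Proof. by case/diag_skew_lam => *; split; rewrite skew_lamp; apply/orP; left. Qed.

Notation Nl := (seq_sub (skew_nodes lam mu)).
Notation Np := (seq_sub (skew_nodes lamp mu)).

Let skew_sub : {subset skew_nodes lam mu <= skew_nodes lamp mu}.
Proof. by move=> y y_skew; rewrite skew_lamp y_skew. Qed.

Notation emb := (skew_emb skew_sub).
Let emb_inj : injective emb := skew_emb_inj (skew_sub := skew_sub).

Lemma l_skew : l \in skew_nodes lamp mu.
Proof. by rewrite skew_lamp eqxx orbT. Qed.

Let ln : Np := SeqSub l_skew.

Lemma emb_neq_ln x : emb x != ln.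
Proof.
apply/eqP=> /(congr1 val) /= Ex; move: (ssvalP x).
by rewrite Ex mem_skew_nodes (negbTE l_addable.1).
Qed.

Lemma ln_notin_emb (T : {set Nl}) : ln \notin emb @: T.
Proof. by apply/imsetP=> -[x _ /eqP]; rewrite eq_sym (negbTE (emb_neq_ln x)). Qed.

Lemma Np_cases (y : Np) : y = ln \/ exists x, y = emb x.
Proof.
have := ssvalP y; rewrite skew_lamp => /orP[y_skew | /eqP Ey].
  by right; exists (SeqSub y_skew); apply: val_inj.
by left; apply: val_inj.
Qed.

Lemma val_Np_neq_NW (y : Np) : val y != NW l.
Proof.
apply/eqP=> Ey; move: (ssvalP y); rewrite Ey mem_skew_nodes lampE.
by rewrite (negbTE (addable_NW_notin lam_part l_addable)) (negbTE (NW_neq l)).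
Qed.

Lemma val_Np_neq_NE (y : Np) : val y != NE l.
Proof.
apply/eqP=> Ey; move: (ssvalP y); rewrite Ey mem_skew_nodes lampE.
by rewrite (negbTE (addable_NE_notin lam_part l_addable)) (negbTE (NE_neq l)).
Qed.

(* The diagonal nodes below [l] are in the way: if the tile of [l] contained [SW l]
   or [SE l], it would also contain [up_diag m d.-1], which lies in the column of [l]. *)
Lemma pblock_ln (P : {set {set Np}}) : is_dyck_tiling P -> cover_expansive P ->
  pblock P ln = [set ln].
Proof.
move=> P_tiling P_exp.
have below_out w : w \in pblock P ln -> val w = SW l \/ val w = SE l -> False.
  rewrite {1 2}l_up_diag => wl /(pblock_below_diag P_tiling P_exp diag_skew_lamp
    (addable_SW_notin_skew _ m_addable) (addable_SE_notin_skew _ m_addable)).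
  case=> d_gt0 [z zw Ez].
  have col_z : column (val z) = column (val ln) by rewrite Ez column_up_diag.
  have z_neq : z != ln.
    apply/eqP=> /(congr1 val); rewrite Ez -[val ln]/l l_up_diag => /up_diag_inj.
    lia.
  have wz : w \in pblock P z by rewrite (mem_pblock_sym P_tiling).
  by rewrite (negbTE (pblock_column_disjoint P_tiling col_z z_neq wz)) in wl.
apply/setP=> y; rewrite inE; apply/idP/eqP=> [yl | ->]; last exact: mem_pblock_self.
case: (ltgtP (column (val y)) (column (val ln))) => [lt_yl | lt_ly | eq_col].
- have [w wl /orP[/eqP Ew | /eqP Ew]] := tile_stepN_to (pblock_tile P_tiling ln)
    (mem_pblock_self P_tiling ln) yl lt_yl.
    by case: (below_out w wl); left; rewrite -[l]/(val ln) Ew SW_NE.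
  by move: (val_Np_neq_NW w); rewrite -Ew eqxx.
- have [w wl /orP[/eqP Ew | /eqP Ew]] := tile_stepN_from (pblock_tile P_tiling ln)
    (mem_pblock_self P_tiling ln) yl lt_ly.
    by move: (val_Np_neq_NE w); rewrite Ew eqxx.
  by case: (below_out w wl); right; rewrite -[l]/(val ln) -Ew SE_NW.
- exact/esym/(pblock_column_inj P_tiling yl).
Qed.

Implicit Types (x : Nl) (Q : {set {set Nl}}).

Definition add_l_tile (Q : {set {set Nl}}) : {set {set Np}} :=
  [set ln] |: [set emb @: (T : {set Nl}) | T in Q].

Lemma add_l_tileP Q (T : {set Np}) : T \in add_l_tile Q ->
  T = [set ln] \/ exists2 T0, T0 \in Q & T = emb @: T0.
Proof. by case/setU1P=> [-> | /imsetP[T0 T0Q ->]]; [left | right; exists T0]. Qed.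

Lemma emb_in_add_l_tile Q (T : {set Nl}) : (emb @: T \in add_l_tile Q) = (T \in Q).
Proof.
rewrite in_setU1 (mem_imset _ _ (imset_inj emb_inj)).
by case: eqP => //= ET; move: (ln_notin_emb T); rewrite ET set11.
Qed.

Lemma add_l_tile_inj : injective add_l_tile.
Proof. by move=> Q1 Q2 EQ; apply/setP=> T; rewrite -!(emb_in_add_l_tile _ T) EQ. Qed.

Lemma add_l_tile_ln Q (T : {set Np}) : T \in add_l_tile Q -> ln \in T -> T = [set ln].
Proof. by case/add_l_tileP=> [// | [T0 _ ->]]; rewrite (negbTE (ln_notin_emb T0)). Qed.

Lemma add_l_tile_emb Q (T : {set Np}) x : T \in add_l_tile Q -> emb x \in T ->
  exists2 T0, T0 \in Q & T = emb @: T0 /\ x \in T0.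
Proof.
case/add_l_tileP=> [-> /set1P/eqP | [T0 T0Q ->]]; first by rewrite (negbTE (emb_neq_ln x)).
by rewrite (mem_imset _ _ emb_inj); exists T0.
Qed.

Lemma partition_add_l_tile Q : partition (add_l_tile Q) [set: Np] = partition Q [set: Nl].
Proof.
rewrite -(imset_partition _ _ emb_inj).
have setTE : [set: Np] = ln |: emb @: [set: Nl].
  apply/setP=> y; rewrite !inE; have [-> | [x ->]] := Np_cases y; first by rewrite eqxx.
  by rewrite imset_f ?orbT.
have ln_tile_notin : [set ln] \notin [set emb @: (T : {set Nl}) | T in Q].
  by apply/imsetP=> -[T _ ET]; move: (ln_notin_emb T); rewrite -ET set11.
rewrite setTE; apply/idP/idP=> [part | part].
  by have := partitionD1 part (setU11 _ _); rewrite !setU1K // ln_notin_emb.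
apply: partitionU1 part _ _; first by apply/set0Pn; exists ln; rewrite set11.
by rewrite disjoints1 ln_notin_emb.
Qed.

Lemma dyck_tiling_add_l_tile Q : is_dyck_tiling (add_l_tile Q) = is_dyck_tiling Q.
Proof.
rewrite /is_dyck_tiling partition_add_l_tile; congr andb.
apply/forall_inP/forall_inP=> tiles T TQ.
  by rewrite -(is_dyck_tile_emb skew_sub); apply: tiles; rewrite emb_in_add_l_tile.
case/add_l_tileP: TQ => [-> | [T0 T0Q ->]]; first exact: dyck_tile1.
by rewrite is_dyck_tile_emb; apply: tiles.
Qed.

Lemma below_l_column Q (T : {set Nl}) y : is_dyck_tiling Q -> cover_expansive Q ->
  T \in Q -> y \in T -> val y = SW l \/ val y = SE l ->
  exists2 z, z \in T & column (val z) = column l.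
Proof.
move=> Q_tiling Q_exp TQ yT; rewrite {1 2}l_up_diag.
case/(pblock_below_diag Q_tiling Q_exp diag_skew_lam (addable_SW_notin_skew _ m_addable)
  (addable_SE_notin_skew _ m_addable)) => _ [z zy Ez].
by exists z; rewrite -?(pblock_eq Q_tiling TQ yT) // Ez column_up_diag.
Qed.

(* The only constraint not inherited from [Q] puts [l] above [SE l], whose tile reaches
   the column of [l]. *)
Lemma expansive_SE_add_l_tile Q : is_dyck_tiling Q -> cover_expansive Q ->
  expansive_SE (add_l_tile Q).
Proof.
move=> Q_tiling Q_exp; have [Q_SE _] := (cover_expansiveP Q).1 Q_exp.
move=> x y sx sy Tx Ty TxF TyF xTx yTy Exy sx_start sy_start.
have [Ey | [y0 Ey]] := Np_cases y; first by move: (val_Np_neq_NW x); rewrite -Exy Ey eqxx.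
subst y; have [Ty0 Ty0Q [ETy y0Ty0]] := add_l_tile_emb TyF yTy; subst Ty.
have [sy0 -> sy0_start] := starts_at_emb_inv sy_start.
have [Ex | [x0 Ex]] := Np_cases x; subst x.
  have -> : sx = ln by move: sx_start; rewrite (add_l_tile_ln TxF xTx) => /andP[/set1P].
  have [|z zTy0 col_z] := below_l_column Q_tiling Q_exp Ty0Q y0Ty0.
    by right; rewrite -[l]/(val ln) -Exy SE_NW.
  by rewrite -col_z (starts_at_le sy0_start zTy0).
have [Tx0 Tx0Q [ETx x0Tx0]] := add_l_tile_emb TxF xTx; subst Tx.
have [sx0 -> sx0_start] := starts_at_emb_inv sx_start.
exact: Q_SE Tx0Q Ty0Q x0Tx0 y0Ty0 Exy sx0_start sy0_start.
Qed.

Lemma expansive_SW_add_l_tile Q : is_dyck_tiling Q -> cover_expansive Q ->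
  expansive_SW (add_l_tile Q).
Proof.
move=> Q_tiling Q_exp; have [_ Q_SW] := (cover_expansiveP Q).1 Q_exp.
move=> x y ex ey Tx Ty TxF TyF xTx yTy Exy ex_end ey_end.
have [Ey | [y0 Ey]] := Np_cases y; first by move: (val_Np_neq_NE x); rewrite -Exy Ey eqxx.
subst y; have [Ty0 Ty0Q [ETy y0Ty0]] := add_l_tile_emb TyF yTy; subst Ty.
have [ey0 -> ey0_end] := ends_at_emb_inv ey_end.
have [Ex | [x0 Ex]] := Np_cases x; subst x.
  have -> : ex = ln by move: ex_end; rewrite (add_l_tile_ln TxF xTx) => /andP[/set1P].
  have [|z zTy0 col_z] := below_l_column Q_tiling Q_exp Ty0Q y0Ty0.
    by left; rewrite -[l]/(val ln) -Exy SW_NE.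
  by rewrite -[column (val ln)]col_z (ends_at_ge ey0_end zTy0).
have [Tx0 Tx0Q [ETx x0Tx0]] := add_l_tile_emb TxF xTx; subst Tx.
have [ex0 -> ex0_end] := ends_at_emb_inv ex_end.
exact: Q_SW Tx0Q Ty0Q x0Tx0 y0Ty0 Exy ex0_end ey0_end.
Qed.

Lemma cover_expansive_add_l_tile Q : is_dyck_tiling Q ->
  cover_expansive (add_l_tile Q) = cover_expansive Q.
Proof.
move=> Q_tiling; apply/idP/idP=> [/cover_expansiveP[F_SE F_SW] | Q_exp]; apply/cover_expansiveP.
  split=> x y s1 s2 Tx Ty TxQ TyQ xTx yTy Exy s1T s2T.
    apply: (F_SE (emb x) (emb y) (emb s1) (emb s2) (emb @: Tx) (emb @: Ty));
      by rewrite ?emb_in_add_l_tile ?starts_at_emb ?(mem_imset _ _ emb_inj).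
  apply: (F_SW (emb x) (emb y) (emb s1) (emb s2) (emb @: Tx) (emb @: Ty));
    by rewrite ?emb_in_add_l_tile ?ends_at_emb ?(mem_imset _ _ emb_inj).
by split; [apply: expansive_SE_add_l_tile | apply: expansive_SW_add_l_tile].
Qed.

Lemma cover_expansive_tiling_add_l_tile Q :
  is_dyck_tiling (add_l_tile Q) && cover_expansive (add_l_tile Q) =
  is_dyck_tiling Q && cover_expansive Q.
Proof.
rewrite dyck_tiling_add_l_tile; case Q_tiling: (is_dyck_tiling Q) => //=.
exact: cover_expansive_add_l_tile.
Qed.

Definition drop_l_tile (P : {set {set Np}}) : {set {set Nl}} :=
  [set emb @^-1: (T : {set Np}) | T in [set T in P | T != [set ln]]].

Lemma drop_l_tileK P : is_dyck_tiling P -> cover_expansive P ->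
  add_l_tile (drop_l_tile P) = P.
Proof.
move=> P_tiling P_exp.
have embK T : T \in P -> T != [set ln] -> emb @: (emb @^-1: T) = T.
  move=> TP T_neq; apply/setP=> y; apply/imsetP/idP=> [[x + ->] | yT]; first by rewrite inE.
  have [Ey | [x Ey]] := Np_cases y; last by exists x; rewrite // inE -Ey.
  by case/eqP: T_neq; rewrite -(pblock_eq P_tiling TP yT) Ey pblock_ln.
apply/setP=> T; apply/idP/idP=> [/add_l_tileP[-> | [_ /imsetP[T0 + ->] ->]] | TP].
- by rewrite -(pblock_ln P_tiling P_exp) pblock_tiling.
- by rewrite inE => /andP[T0P T0_neq]; rewrite embK.
rewrite in_setU1; case: eqP => //= /eqP T_neq.
apply/imsetP; exists (emb @^-1: T); last by rewrite embK.
by apply/imsetP; exists T; rewrite // inE TP.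
Qed.

Lemma card_cover_expansive_add_node :
  #|[set P : {set {set Np}} | is_dyck_tiling P && cover_expansive P]| =
  #|[set Q : {set {set Nl}} | is_dyck_tiling Q && cover_expansive Q]|.
Proof.
rewrite -(card_imset _ add_l_tile_inj); apply: eq_card => P; rewrite [in LHS]inE.
apply/idP/imsetP=> [/andP[P_tiling P_exp] | [Q + ->]].
  exists (drop_l_tile P); rewrite ?drop_l_tileK //.
  by rewrite inE -cover_expansive_tiling_add_l_tile drop_l_tileK ?P_tiling.
by rewrite inE cover_expansive_tiling_add_l_tile.
Qed.

End AddNode.

Theorem proposition4p8 (j : int) (lam mu lamp : seq nat) (l : node) :
  is_partition lam -> is_partition mu ->
  addable lam l -> column l = j ->
  (exists m : node, addable mu m /\ column m = j) ->
  is_partition lamp ->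
  (forall n : node, in_diagram lamp n = in_diagram lam n || (n == l)) ->
  e_coef lamp mu = e_coef lam mu.
Proof.
(* [is_partition lamp] is implied by the other hypotheses. *)
move=> lam_part mu_part l_addable <- [m [m_addable col_ml]] _ lampE.
rewrite /e_coef (contains_add_node lam_part mu_part l_addable lampE m_addable col_ml).
case: ifP => // /containsP mu_sub.
exact: card_cover_expansive_add_node lam_part mu_part l_addable lampE m_addable col_ml mu_sub.
Qed.
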